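(* Let $G=(V,E)$ be a finite graph with special vertex $i$, symmetric edge weights $w_E$ (with $w_E(u,v)=0$ for $uv\notin E$) and vertex weights $w_V$ (nonnegative, not identically zero), such that $G$ and $G-i$ are each positively connected. Let $f_i$ be a solution of $$\min_{\|g\|_w=1,\ g(i)=0}\ \sum_{jk\in E} w_E(j,k)\,(g(k)-g(j))^2,$$ positive on $V\setminus\{i\}$. Fix vertices $j,k$ such that $G-j$ is not connected and $i$ and $k$ lie in different components of $G-j$, and suppose $w_V(k)>0$. Then $f_i(k)>f_i(j)$. Moreover, the spectral path from $k$ to $i$ passes through $j$.
   Context: $\|g\|_w=\sqrt{\sum_{u\in V}w_V(u)g(u)^2}$; each edge is counted once. A weighted graph is positively connected if any two vertices are joined by a path of positive-weight edges; $G-x$ is $G$ with vertex $x$ deleted. Edges of weight zero are regarded as deleted, so neighborhoods $N(u)$, paths and connectivity refer to positive-weight edges. The spectral path from $k$ to $i$ is the sequence $k=k_0,k_1,\dots$ where $k_{\ell+1}$ is a neighbor of $k_\ell$ minimizing $f_i$ over $N(k_\ell)$ (ties broken arbitrarily), stopped when $i$ is reached; under the hypotheses it is well-defined, with $f_i$ strictly decreasing along it. *)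

From HB Require Import structures.
From mathcomp Require Import all_boot all_order all_algebra.
Set Implicit Arguments. Unset Strict Implicit. Unset Printing Implicit Defensive.
Import Order.TTheory GRing.Theory Num.Theory.
Local Open Scope ring_scope.

(* Weighted graph on a finite vertex type V; wE : V -> V -> R edge weights,
   edges of weight zero are regarded as deleted. *)

Definition pos_adj_in (R : numDomainType) (V : finType) (wE : V -> V -> R)
  (S : {set V}) : rel V :=
  fun u v => [&& u \in S, v \in S, u != v & 0 < wE u v].

Definition pos_connected_in (R : numDomainType) (V : finType) (wE : V -> V -> R)
  (S : {set V}) (u v : V) : bool :=
  connect (pos_adj_in wE S) u v.

Definition pos_connected (R : numDomainType) (V : finType) (wE : V -> V -> R)
  (S : {set V}) : Prop :=
  forall u v, u \in S -> v \in S -> pos_connected_in wE S u v.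

Definition nbhd (R : numDomainType) (V : finType) (wE : V -> V -> R) (u : V)
  : {set V} := [set v | (v != u) && (0 < wE u v)].

Definition wnorm (R : rcfType) (V : finType) (wV : V -> R) (g : V -> R) : R :=
  Num.sqrt (\sum_(u : V) wV u * g u ^+ 2).

(* Dirichlet energy, each (unordered) edge counted once *)
Definition energy (R : numDomainType) (V : finType) (wE : V -> V -> R)
  (g : V -> R) : R :=
  \sum_(jk : V * V | (enum_rank jk.1 < enum_rank jk.2)%N)
      wE jk.1 jk.2 * (g jk.2 - g jk.1) ^+ 2.

Definition is_minimizer (R : rcfType) (V : finType) (wE : V -> V -> R)
  (wV : V -> R) (i : V) (f : V -> R) : Prop :=
  [/\ wnorm wV f = 1, f i = 0 &
      forall g : V -> R, wnorm wV g = 1 -> g i = 0 -> energy wE f <= energy wE g].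

Definition spectral_step (R : numDomainType) (V : finType) (wE : V -> V -> R)
  (f : V -> R) : rel V :=
  fun x y => (y \in nbhd wE x) && [forall z in nbhd wE x, f y <= f z].

(* k :: p is a spectral path from k to i (with any tie-breaking),
   stopped when i is first reached *)
Definition spectral_path (R : numDomainType) (V : finType) (wE : V -> V -> R)
  (f : V -> R) (i k : V) (p : seq V) : Prop :=
  [/\ path (spectral_step wE f) k p, last k p = i & i \notin belast k p].

From HB Require Import structures.
From mathcomp Require Import all_boot all_order all_algebra.
From mathcomp Require Import ring.
Set Implicit Arguments. Unset Strict Implicit. Unset Printing Implicit Defensive.
Import Order.TTheory GRing.Theory Num.Theory.
Local Open Scope ring_scope.

(* Perturbing f_i at a single vertex u != i shows that f_i satisfies the
   eigenvalue equation  (L f_i)(u) = lambda w_V(u) f_i(u),  lambda being the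
   minimal energy, which is positive because G is connected.  Hence f_i is
   superharmonic on the component C of k in G - j.  If f_i(k) <= f_i(j), a
   minimum of f_i over C is also a minimum over its neighbourhood, so the
   Laplacian vanishes there and the minimum value spreads over all of C.  At
   k this gives lambda w_V(k) f_i(k) = 0, contradicting w_V(k) > 0.  The
   spectral path moves along positive edges, so it cannot get from k to i
   without passing through j. *)

Section Energy.

Variables (R : numDomainType) (V : finType) (wE : V -> V -> R).

Definition dirichlet (g h : V -> R) : R :=
  \sum_a \sum_b wE a b * ((g b - g a) * (h b - h a)).

Definition laplacian (g : V -> R) (u : V) : R := \sum_v wE u v * (g u - g v).

Definition dirac (u : V) : V -> R := fun v => (v == u)%:R.

Lemma dirichlet_shift g h t :
  dirichlet (fun v => g v + t * h v) (fun v => g v + t * h v) =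
  dirichlet g g + t *+ 2 * dirichlet g h + t ^+ 2 * dirichlet h h.
Proof.
rewrite /dirichlet !mulr_sumr -!big_split /=; apply: eq_bigr => a _.
by rewrite !mulr_sumr -!big_split /=; apply: eq_bigr => b _; ring.
Qed.

Lemma sum_dirac (X : V -> R) u : \sum_v dirac u v * X v = X u.
Proof.
rewrite (bigD1 u) //= /dirac eqxx mul1r big1 ?addr0 // => v /negbTE ->.
by rewrite mul0r.
Qed.

Hypothesis wE_sym : forall u v, wE u v = wE v u.

Lemma energy_dirichlet g : energy wE g *+ 2 = dirichlet g g.
Proof.
rewrite /dirichlet /energy pair_big /= mulr2n.
rewrite [RHS](bigID (fun p : V * V => (enum_rank p.1 < enum_rank p.2)%N)) /=.
congr (_ + _).
rewrite [RHS](reindex_inj (h := fun p : V * V => (p.2, p.1))) /=; last first.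
  by move=> [a b] [c d] [-> ->].
rewrite big_mkcond [RHS]big_mkcond; apply: eq_bigr => [[a b]] _ /=.
case: ltngtP => [_|_|/val_inj/enum_rank_inj ->] //=.
  by rewrite wE_sym -expr2 -sqrrN opprB.
by rewrite subrr mul0r mulr0.
Qed.

Lemma dirichlet_dirac g u : dirichlet g (dirac u) = laplacian g u *+ 2.
Proof.
have -> : dirichlet g (dirac u) =
    \sum_a \sum_b dirac u b * (wE a b * (g b - g a))
  - \sum_a dirac u a * \sum_b wE a b * (g b - g a).
  rewrite /dirichlet -sumrB; apply: eq_bigr => a _.
  by rewrite mulr_sumr -sumrB; apply: eq_bigr => b _; rewrite /dirac; ring.
rewrite exchange_big /=.
under eq_bigr => b _ do rewrite -mulr_sumr.
rewrite !sum_dirac mulr2n /laplacian; congr (_ + _).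
  by apply: eq_bigr => v _; rewrite wE_sym.
by rewrite -sumrN; apply: eq_bigr => v _; ring.
Qed.

Lemma energy_shift_dirac g u t :
  energy wE (fun v => g v + t * dirac u v) =
  energy wE g + t *+ 2 * laplacian g u + t ^+ 2 * energy wE (dirac u).
Proof.
apply: (@pmulrnI _ 2) => //=.
by rewrite !mulrnDl -!mulrnAr !energy_dirichlet dirichlet_shift dirichlet_dirac.
Qed.

End Energy.

Definition wsum (R : numDomainType) (V : finType) (wV g : V -> R) : R :=
  \sum_v wV v * g v ^+ 2.

Lemma wsum_shift_dirac (R : numDomainType) (V : finType) (wV : V -> R) g u t :
  wsum wV (fun v => g v + t * dirac R u v) =
  wsum wV g + t *+ 2 * (wV u * g u) + t ^+ 2 * wV u.
Proof.
have -> : wsum wV (fun v => g v + t * dirac R u v) =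
    wsum wV g + \sum_v dirac R u v * (t *+ 2 * (wV v * g v) + t ^+ 2 * wV v).
  rewrite /wsum -big_split; apply: eq_bigr => v _ /=.
  by rewrite /dirac; case: (v == u) => /=; ring.
by rewrite sum_dirac addrA.
Qed.

Lemma quadratic_ge0_linear_eq0 (R : realFieldType) (a b : R) :
  (forall t, 0 <= t * a + t ^+ 2 * b) -> a = 0.
Proof.
move=> ge0; apply/eqP; apply: contraT => a_neq0.
set c := `|b| + 1; have c_gt0 : 0 < c by rewrite ltr_wpDl.
have := ge0 (- a / c).
have -> : - a / c * a + (- a / c) ^+ 2 * b = a ^+ 2 / c * (b / c - 1).
  by field; rewrite gt_eqF.
rewrite pmulr_rge0 ?divr_gt0 ?exprn_even_gt0 // subr_ge0.
by rewrite ler_pdivlMr // mul1r lt_geF // (le_lt_trans (ler_norm b)) ?ltrDl.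
Qed.

Section NonnegativeWeights.

Variables (R : realDomainType) (V : finType) (wE : V -> V -> R).
Hypothesis wE_sym : forall u v, wE u v = wE v u.
Hypothesis wE_ge0 : forall u v, 0 <= wE u v.

Lemma energy_ge0 g : 0 <= energy wE g.
Proof. by apply: sumr_ge0 => p _; rewrite mulr_ge0 ?sqr_ge0. Qed.

Lemma energyZ g c : energy wE (fun v => c * g v) = c ^+ 2 * energy wE g.
Proof. by rewrite /energy mulr_sumr; apply: eq_bigr => p _; ring. Qed.

Lemma energy_eq0_adj g a b : energy wE g = 0 -> 0 < wE a b -> g a = g b.
Proof.
move=> g0 wab.
have : dirichlet wE g g = 0 by rewrite -energy_dirichlet // g0 mul0rn.
rewrite /dirichlet pair_big /= => /psumr_eq0P /(_ (a, b) isT) /=.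
have terms_ge0 (p : V * V) :
    0 <= wE p.1 p.2 * ((g p.2 - g p.1) * (g p.2 - g p.1)).
  by rewrite mulr_ge0 // -expr2 sqr_ge0.
move=> /(_ (fun p _ => terms_ge0 p)) /eqP.
by rewrite mulf_eq0 gt_eqF //= mulf_eq0 orbb subr_eq0 => /eqP.
Qed.

Lemma energy_gt0 g a b :
  pos_connected wE [set: V] -> g a != g b -> 0 < energy wE g.
Proof.
move=> conn gab; rewrite lt_def energy_ge0 andbT; apply: contraNneq gab => g0.
have closed_g : closed (pos_adj_in wE [set: V]) [pred x | g x == g a].
  by move=> x y /and4P[_ _ _ wxy]; rewrite !inE (energy_eq0_adj g0 wxy).
have := closed_connect closed_g (conn a b (in_setT a) (in_setT b)).
by rewrite !inE eqxx eq_sym => <-.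
Qed.

Section LocalMinimum.

Variables (g : V -> R) (x : V).
Hypothesis min_x : forall v, v != x -> 0 < wE x v -> g x <= g v.

Lemma laplacian_term_le0_at_min v : wE x v * (g x - g v) <= 0.
Proof.
have [->|vx] := eqVneq v x; first by rewrite subrr mulr0.
move: (wE_ge0 x v); rewrite le_eqVlt => /predU1P[<-|wxv]; first by rewrite mul0r.
by rewrite mulr_ge0_le0 ?(ltW wxv) // subr_le0 min_x.
Qed.

Lemma laplacian_le0_at_min : laplacian wE g x <= 0.
Proof. by apply: sumr_le0 => v _; apply: laplacian_term_le0_at_min. Qed.

Lemma laplacian_eq0_at_min : laplacian wE g x = 0 ->
  forall v, v != x -> 0 < wE x v -> g v = g x.
Proof.
move=> lap0 v vx wxv.
have : - (wE x v * (g x - g v)) = 0.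
  apply: (psumr_eq0P (P := predT) (F := fun y => - (wE x y * (g x - g y)))) => //.
    by move=> y _; rewrite oppr_ge0 laplacian_term_le0_at_min.
  by rewrite sumrN -/(laplacian wE g x) lap0 oppr0.
by move/eqP; rewrite oppr_eq0 mulf_eq0 gt_eqF //= subr_eq0 => /eqP.
Qed.

End LocalMinimum.

End NonnegativeWeights.

Section Rayleigh.

Variables (R : rcfType) (V : finType) (wE : V -> V -> R) (wV : V -> R).
Hypothesis wE_ge0 : forall u v, 0 <= wE u v.
Hypothesis wV_ge0 : forall u, 0 <= wV u.

Lemma wsum_ge0 g : 0 <= wsum wV g.
Proof. by apply: sumr_ge0 => v _; rewrite mulr_ge0 ?sqr_ge0. Qed.

Lemma wsumZ g c : wsum wV (fun v => c * g v) = c ^+ 2 * wsum wV g.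
Proof. by rewrite /wsum mulr_sumr; apply: eq_bigr => v _; ring. Qed.

Variables (i : V) (f : V -> R).
Hypothesis f_min : is_minimizer wE wV i f.

Lemma wsum_minimizer : wsum wV f = 1.
Proof.
have [wnorm_f _ _] := f_min; move: wnorm_f.
rewrite /wnorm -/(wsum wV f) => wnorm_f.
by rewrite -(sqr_sqrtr (wsum_ge0 f)) wnorm_f expr1n.
Qed.

Lemma minimizer_rayleigh g : g i = 0 -> energy wE f * wsum wV g <= energy wE g.
Proof.
move=> gi0; have [_ _ f_le] := f_min.
have [<-|wsum_gt0] := eqVneq 0 (wsum wV g); first by rewrite mulr0 energy_ge0.
have {}wsum_gt0 : 0 < wsum wV g by rewrite lt_def eq_sym wsum_gt0 wsum_ge0.
pose c := (Num.sqrt (wsum wV g))^-1.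
have c2 : c ^+ 2 = (wsum wV g)^-1 by rewrite exprVn sqr_sqrtr ?ltW.
rewrite -ler_pdivlMr // mulrC -c2 -energyZ; apply: f_le; last by rewrite gi0 mulr0.
by rewrite /wnorm -/(wsum wV _) wsumZ c2 mulVf ?sqrtr1 ?gt_eqF.
Qed.

Hypothesis wE_sym : forall u v, wE u v = wE v u.

Lemma minimizer_laplacian u :
  u != i -> laplacian wE f u = energy wE f * (wV u * f u).
Proof.
move=> ui; set L := energy wE f.
suff : (laplacian wE f u - L * (wV u * f u)) *+ 2 = 0.
  by move/eqP; rewrite mulrn_eq0 /= subr_eq0 => /eqP.
apply: (@quadratic_ge0_linear_eq0 _ _ (energy wE (dirac R u) - L * wV u)) => t.
have [_ fi0 _] := f_min.
have := @minimizer_rayleigh (fun v => f v + t * dirac R u v).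
rewrite energy_shift_dirac // wsum_shift_dirac wsum_minimizer -subr_ge0.
rewrite /dirac eq_sym (negbTE ui) fi0 mulr0 addr0 => /(_ erefl).
by congr (0 <= _); rewrite -/L; ring.
Qed.

End Rayleigh.

Lemma connect_propagate (T : finType) (e : rel T) (P : pred T) k :
  connect_sym e -> (forall x y, connect e k x -> e x y -> P x -> P y) ->
  {in connect e k &, forall x y, P x -> P y}.
Proof.
move=> sym_e stepP x y; rewrite !inE => kx ky Px.
have closed_P : closed e [pred z | connect e k z ==> P z].
  apply: intro_closed => // a b eab /implyP Pa; apply/implyP => kb.
  have ka : connect e k a by apply: connect_trans kb _; rewrite sym_e connect1.
  exact: stepP ka eab (Pa ka).
have xy : connect e x y by apply: connect_trans ky; rewrite sym_e.
by have := closed_connect closed_P xy; rewrite !inE kx ky Px => /esym.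
Qed.

Section Components.

Variables (R : numDomainType) (V : finType) (wE : V -> V -> R).

Lemma pos_connected_in_mem (S : {set V}) k x :
  k \in S -> pos_connected_in wE S k x -> x \in S.
Proof.
move=> kS kx; have closed_S : closed (pos_adj_in wE S) (mem S).
  by move=> a b /and4P[-> -> _ _].
by rewrite -(closed_connect closed_S kx).
Qed.

Lemma pos_connected_in_nbhd (S : {set V}) k x v :
  k \in S -> pos_connected_in wE S k x -> v \in S -> v != x -> 0 < wE x v ->
  pos_connected_in wE S k v.
Proof.
move=> kS kx vS vx wxv; apply/(connect_trans kx)/connect1.
by rewrite /pos_adj_in (pos_connected_in_mem kS kx) vS eq_sym vx.
Qed.

Hypothesis wE_sym : forall u v, wE u v = wE v u.

Lemma pos_adj_in_sym S : symmetric (pos_adj_in wE S).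
Proof.
by move=> x y; rewrite /pos_adj_in andbCA [y == x]eq_sym wE_sym andbA.
Qed.

Lemma pos_connected_in_sym S : connect_sym (pos_adj_in wE S).
Proof. exact/sym_connect_sym/pos_adj_in_sym. Qed.

Lemma spectral_path_mem_separator (f : V -> R) i j k p :
  ~~ pos_connected_in wE [set~ j] i k -> spectral_path wE f i k p ->
  j \in k :: p.
Proof.
move=> nik [step_p last_p _]; apply: contraT => jp; case/negP: nik.
have adj_p : path (pos_adj_in wE [set~ j]) k p.
  apply: (sub_in_path (P := [pred x | x != j])) step_p; last first.
    by apply/allP => x xp /=; apply: contraNneq jp => <-.
  move=> x y; rewrite !inE => xj yj /andP[]; rewrite inE => /andP[yx wxy] _.
  by rewrite /pos_adj_in !in_setC1 xj yj eq_sym yx.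
by rewrite /pos_connected_in pos_connected_in_sym; apply/connectP; exists p.
Qed.

End Components.

Section MinimumPrinciple.

Variables (R : realDomainType) (V : finType) (wE : V -> V -> R).
Hypothesis wE_sym : forall u v, wE u v = wE v u.
Hypothesis wE_ge0 : forall u v, 0 <= wE u v.

Variables (S : {set V}) (k : V) (g : V -> R).
Hypothesis k_in_S : k \in S.
Let C := pos_connected_in wE S k.
Hypothesis g_superharmonic : {in C, forall x, 0 <= laplacian wE g x}.
Hypothesis g_boundary : {in ~: S, forall v, g k <= g v}.

Lemma component_min_local x :
  x \in C -> {in C, forall y, g x <= g y} ->
  forall v, v != x -> 0 < wE x v -> g x <= g v.
Proof.
move=> xC x_min v vx wxv; have [vS|vNS] := boolP (v \in S).
  exact: x_min (pos_connected_in_nbhd k_in_S xC vS vx wxv).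
by apply: le_trans (x_min k (connect0 _ k)) (g_boundary _); rewrite inE.
Qed.

Lemma component_min_harmonic x :
  x \in C -> {in C, forall y, g x <= g y} -> laplacian wE g x = 0.
Proof.
move=> xC x_min; apply: le_anti; rewrite g_superharmonic // andbT.
exact/laplacian_le0_at_min/component_min_local.
Qed.

Lemma superharmonic_const_on_component : {in C &, forall x y, g x = g y}.
Proof.
have [u0 u0C u0_min] := arg_minP g (connect0 (pos_adj_in wE S) k : k \in C).
suff g_u0 : {in C, forall x, g x = g u0} by move=> x y xC yC; rewrite !g_u0.
have spread x y : C x -> pos_adj_in wE S x y -> g x == g u0 -> g y == g u0.
  move=> xC /and4P[_ _ xy wxy] /eqP gx.
  have x_min : {in C, forall z, g x <= g z} by move=> z zC; rewrite gx u0_min.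
  have lap0 := component_min_harmonic xC x_min.
  apply/eqP; rewrite -gx (laplacian_eq0_at_min wE_ge0 _ lap0) ?(eq_sym y) //.
  exact: component_min_local.
move=> x xC; apply/eqP.
by apply: (connect_propagate (pos_connected_in_sym wE_sym S) spread u0C xC).
Qed.

Lemma superharmonic_harmonic_on_component :
  {in C, forall x, laplacian wE g x = 0}.
Proof.
move=> x xC; apply: component_min_harmonic => // y yC.
by rewrite (superharmonic_const_on_component xC yC).
Qed.

End MinimumPrinciple.

Theorem theorem10 (R : rcfType) (V : finType) (wE : V -> V -> R) (wV : V -> R)
  (i : V) (f : V -> R) (j k : V) :
  (forall u v, wE u v = wE v u) ->
  (forall u v, 0 <= wE u v) ->
  (forall u, 0 <= wV u) ->
  (exists u, wV u != 0) ->
  pos_connected wE [set: V] ->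
  pos_connected wE [set~ i] ->
  is_minimizer wE wV i f ->
  (forall u, u != i -> 0 < f u) ->
  ~ pos_connected wE [set~ j] ->
  i != j -> k != j ->
  ~~ pos_connected_in wE [set~ j] i k ->
  0 < wV k ->
  f j < f k /\
  (forall p : seq V, spectral_path wE f i k p -> j \in k :: p).
Proof.
move=> wE_sym wE_ge0 wV_ge0 _ conn _ f_min f_pos _ _ kj nik wVk.
split; last by move=> p; apply: spectral_path_mem_separator.
set C := pos_connected_in wE [set~ j] k.
have C_i x : x \in C -> x != i.
  move=> kx; apply: contraNneq nik => xi.
  by rewrite /pos_connected_in pos_connected_in_sym // -xi.
have k_i : k != i := C_i k (connect0 _ k).
have [_ fi0 _] := f_min.
have energy_f_gt0 : 0 < energy wE f.
  apply: (energy_gt0 wE_sym wE_ge0 (a := i) (b := k) conn).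
  by rewrite fi0 eq_sym gt_eqF ?f_pos.
rewrite ltNge; apply/negP => fkj.
have k_S : k \in [set~ j] by rewrite in_setC1.
have f_super : {in C, forall x, 0 <= laplacian wE f x}.
  move=> x xC; rewrite (minimizer_laplacian wE_ge0 wV_ge0 f_min wE_sym (C_i x xC)).
  by rewrite !mulr_ge0 ?(ltW energy_f_gt0) ?(ltW (f_pos x (C_i x xC))).
have f_boundary : {in ~: [set~ j], forall v, f k <= f v}.
  by move=> v; rewrite setCK inE => /eqP ->.
have := superharmonic_harmonic_on_component wE_sym wE_ge0 k_S f_super f_boundary.
move=> /(_ k (connect0 _ k)).
rewrite (minimizer_laplacian wE_ge0 wV_ge0 f_min wE_sym k_i) => /eqP.
by rewrite !mulf_eq0 !gt_eqF ?f_pos.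
Qed.
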